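(* Let $V\subset\mathbb{R}^d$ be a generic suspended antichain and let $p\in S_V$ be a characteristic point with $D_p=\{v_1,\dots,v_k\}$. For every choice of coordinates $i_1\in T_p(v_1),\dots,i_k\in T_p(v_k)$ with $p_{i_j}>0$ for all $j=1,\dots,k$, there is a maximum $M$ of $S_V$ such that $M_{i_j}=p_{i_j}$ for all $j=1,\dots,k$ (and $M\ge p$). Consequently, if moreover $p_i>0$ for all $i$, there are at least $\prod_{j=1}^k|T_p(v_j)|$ maxima of $S_V$ above $p$.
   Context: For $x,y\in\mathbb{R}^d$, $x\le y$ (dominance order) means $x_i\le y_i$ for all $i$; $y\rhd x$ means $y_i>x_i$ for all $i$; $y\rhd_i x$ means $y_i=x_i$ and $y_j>x_j$ for all $j\neq i$. $V\subset\mathbb{R}^d$ is a finite antichain in the dominance order. The orthogonal surface $S_V$ is the topological boundary of $\langle V\rangle=\{x: x\ge v\text{ for some }v\in V\}$. For $p\in S_V$, $D_p=\{v\in V:v\le p\}$ and $T_p(v)=\{i:p_i=v_i\}$. $V$ is suspended if it contains, for each $i$, a suspension vertex $M_ie_i$ (with $M_i>0$, $e_i$ the $i$-th unit vector), and every other $v\in V$ satisfies $0\le v_i<M_i$ for all $i$. A suspended $V$ is generic if whenever $v\neq w\in V$ and $v_i=w_i$ for some $i$, both $v$ and $w$ are suspension vertices. Flats: $U_i(v)=\{p\in S_V: p\rhd_i v\}$; $v\sim_i w$ iff $U_i(v)\cap U_i(w)\neq\emptyset$, with reflexive–transitive closure $\sim_i^c$; the $i$-flat of $v$ is $F_i(v)=\overline{\bigcup_{w\sim_i^c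 v}U_i(w)}$, and an $i$-flat is any set of this form. A characteristic point is a point of $S_V$ lying in some $i$-flat for every $i$. A maximum of $S_V$ is a point $M\in S_V$ such that there is no $q\in S_V$ with $q\ge M$, $q\neq M$. *)

From HB Require Import structures.
From mathcomp Require Import all_boot all_order all_algebra.
From mathcomp Require Import reals.
From Stdlib Require Import Relations.
Set Implicit Arguments. Unset Strict Implicit. Unset Printing Implicit Defensive.
Import Order.TTheory GRing.Theory Num.Theory.
Local Open Scope ring_scope.

Section OrthSurf.
Variables (R : realType) (d : nat).

Definition pt := {ffun 'I_d -> R}.

Definition dle (x y : pt) : Prop := forall i, x i <= y i.
Definition dtri (i : 'I_d) (y x : pt) : Prop :=
  y i = x i /\ forall j, j != i -> x j < y j.

Definition antichain (V : seq pt) : Prop :=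
  uniq V /\ forall v w, v \in V -> w \in V -> dle v w -> v = w.

Definition upset (V : seq pt) (x : pt) : Prop := exists2 v, v \in V & dle v x.

(* x within sup-distance eps of y (these balls form a base of the
   Euclidean topology of R^d) *)
Definition near_pt (eps : R) (x y : pt) : Prop := forall i, `|x i - y i| < eps.

Definition closure_pt (A : pt -> Prop) (p : pt) : Prop :=
  forall eps, 0 < eps -> exists x, A x /\ near_pt eps x p.

Definition surface (V : seq pt) (p : pt) : Prop :=
  closure_pt (upset V) p /\ closure_pt (fun x => ~ upset V x) p.

Definition Dp (V : seq pt) (p : pt) : seq pt := [seq v : pt <- V | [forall i, v i <= p i]].
Definition Tp (p v : pt) : {set 'I_d} := [set i | p i == v i].

Definition susp_vertex (M : 'I_d -> R) (i : 'I_d) : pt :=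
  [ffun j => if j == i then M i else 0].
Definition is_susp (M : 'I_d -> R) (v : pt) : Prop := exists i, v = susp_vertex M i.

Definition suspended (V : seq pt) (M : 'I_d -> R) : Prop :=
  (forall i, 0 < M i) /\ (forall i, susp_vertex M i \in V) /\
  (forall v, v \in V -> ~ is_susp M v -> forall i, 0 <= v i /\ v i < M i).

Definition generic (V : seq pt) (M : 'I_d -> R) : Prop :=
  forall v w, v \in V -> w \in V -> v != w ->
    forall i, v i = w i -> is_susp M v /\ is_susp M w.

Definition Uset (V : seq pt) (i : 'I_d) (v : pt) (p : pt) : Prop :=
  surface V p /\ dtri i p v.
Definition sim (V : seq pt) (i : 'I_d) (v w : pt) : Prop :=
  v \in V /\ w \in V /\ exists p, Uset V i v p /\ Uset V i w p.
Definition simc (V : seq pt) (i : 'I_d) : relation pt :=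
  clos_refl_trans pt (sim V i).
Definition flat (V : seq pt) (i : 'I_d) (v : pt) : pt -> Prop :=
  closure_pt (fun p => exists w, simc V i v w /\ Uset V i w p).
Definition is_flat (V : seq pt) (i : 'I_d) (F : pt -> Prop) : Prop :=
  exists2 v, v \in V & F = flat V i v.

Definition characteristic (V : seq pt) (p : pt) : Prop :=
  surface V p /\ forall i, exists F, is_flat V i F /\ F p.

Definition maximum (V : seq pt) (M : pt) : Prop :=
  surface V M /\ forall q, surface V q -> dle M q -> q = M.

End OrthSurf.

From HB Require Import structures.
From mathcomp Require Import all_boot all_order all_algebra.
From mathcomp Require Import reals lra.
From Stdlib Require Import Classical.
Set Implicit Arguments.
Unset Strict Implicit.
Unset Printing Implicit Defensive.

Import Order.TTheory GRing.Theory Num.Theory.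
Local Open Scope ring_scope.

(* Let C be the set of chosen coordinates c(v).  Raising p by a small amount
   in the coordinates outside C keeps it off the interior of <V>, because each
   v in D_p still meets it in c(v).  Then each free coordinate j is pushed up
   until the point q hits a vertex w with q |>_j w (the suspension vertex of
   direction j guarantees a candidate); a point of S_V having such a witness in
   every direction is a maximum.  For a chosen coordinate c(v) the witness is v
   itself: by genericity and p > 0 on C, no other vertex meets p in c(v).  The
   same fact separates the maxima obtained from different choices, since each
   lies strictly above p outside the image of its choice. *)

Lemma exists_uniq_image (T U : eqType) (P : T -> U -> Prop) (s : seq T) :
  uniq s -> (forall t, t \in s -> exists u, P t u) ->
  (forall t1 t2 u, t1 \in s -> t2 \in s -> P t1 u -> P t2 u -> t1 = t2) ->
  exists s' : seq U, [/\ uniq s', size s' = size s &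
    forall u, u \in s' -> exists2 t, t \in s & P t u].
Proof.
elim: s => [|t s IH] /=; first by exists [::].
move=> /andP[tns s_uniq] exP injP.
have [u Ptu] := exP t (mem_head _ _).
have [|t1 t2 u' t1s t2s|s' [s'_uniq s'_size s'P]] := IH s_uniq.
- by move=> t' t's; apply: exP; rewrite inE t's orbT.
- by apply: injP; rewrite inE ?t1s ?t2s orbT.
exists (u :: s'); split.
- rewrite /= s'_uniq andbT; apply/negP => /s'P[t' t's Pt'u].
  have tt' : t = t' by apply: injP Ptu Pt'u; rewrite inE ?t's ?eqxx ?orbT.
  by rewrite tt' t's in tns.
- by rewrite /= s'_size.
- move=> u' /[!inE] /predU1P[-> | /s'P[t' t's Pt'u']].
    by exists t; rewrite ?mem_head.
  by exists t'; rewrite // inE t's orbT.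
Qed.

Lemma card_family_tnth (T : Type) (U : finType) (s : seq T)
    (A : T -> {pred U}) :
  #|family (fun j : 'I_(size s) => A (tnth (in_tuple s) j))| =
  \prod_(x <- s) #|A x|.
Proof. by rewrite card_family foldrE big_map [RHS]big_tnth big_enum. Qed.

Section OrthogonalSurface.
Variables (R : realType) (d : nat).
Local Notation pt := (pt R d).
Implicit Types (V : seq pt) (p q v w Mx : pt).

Definition dlt (w q : pt) : Prop := forall i, w i < q i.

Definition not_interior V q : Prop := forall w, w \in V -> ~ dlt w q.

Lemma common_pos_bound (T : eqType) (s : seq T) (Q : T -> R -> Prop) :
  (forall t (e e' : R), Q t e -> 0 < e' -> e' <= e -> Q t e') ->
  (forall t, t \in s -> exists2 e : R, 0 < e & Q t e) ->
  exists2 eps : R, 0 < eps & forall t, t \in s -> Q t eps.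
Proof.
move=> Qdown; elim: s => [|t s IH] Qs; first by exists 1.
have [e1 e1_gt0 Qt] := Qs t (mem_head _ _).
have [e2 e2_gt0 Qs'] : exists2 e, 0 < e & forall t, t \in s -> Q t e.
  by apply: IH => t' t's; apply: Qs; rewrite inE t's orbT.
have min_gt0 : 0 < Num.min e1 e2 by rewrite lt_min e1_gt0.
exists (Num.min e1 e2) => // t'; rewrite inE => /predU1P[-> | t's].
  by apply: (Qdown _ e1) => //; rewrite ge_min lexx.
by apply: (Qdown _ e2 _ (Qs' _ t's)) => //; rewrite ge_min lexx orbT.
Qed.

Lemma seq_argmin (T : eqType) (s : seq T) (f : T -> R) :
  s != [::] -> exists2 x, x \in s & forall y, y \in s -> f x <= f y.
Proof.
elim: s => [//|t [|t' s] IH] _.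
  by exists t; rewrite ?mem_head // => y /[!inE] /eqP ->.
have [x xs minx] := IH isT.
have [ftx | fxt] := leP (f t) (f x).
  exists t; rewrite ?mem_head // => y /[!inE] /predU1P[-> // | ys].
  exact: le_trans ftx (minx _ ys).
exists x; first by rewrite inE xs orbT.
by move=> y /[!inE] /predU1P[-> | ys]; [exact: ltW | exact: minx].
Qed.

(* Near p the sets [<V>] and its complement are both detected by finitely
   many strict coordinate inequalities, so a small enough ball sees p's side. *)
Lemma surfaceP V p : surface V p <-> upset V p /\ not_interior V p.
Proof.
split=> [[clV clVc] | [[v vV vp] p_nint]]; last first.
  split=> e e_gt0.
    by exists p; split; [exists v | move=> i; rewrite subrr normr0].
  exists [ffun i => p i - e / 2]; split.
    case=> u uV up; apply: (p_nint u uV) => i.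
    by have := up i; rewrite ffunE; lra.
  by move=> i; rewrite ffunE ltr_norml; apply/andP; split; lra.
split.
  apply: NNPP => p_nup.
  pose Q v e := forall x, near_pt e x p -> ~ dle v x.
  have [e e_gt0 Qe] : exists2 e, 0 < e & forall v, v \in V -> Q v e.
    apply: common_pos_bound => [v e e' Qve _ e'e x xp | v vV].
      by apply: Qve => i; exact: lt_le_trans (xp i) e'e.
    have [i vi_gt] : exists i, p i < v i.
      apply: NNPP => nex; apply: p_nup; exists v => // i.
      by rewrite leNgt; apply/negP => lt_pv; apply: nex; exists i.
    exists (v i - p i); first by rewrite subr_gt0.
    by move=> x /(_ i) + /(_ i); rewrite ltr_norml => /andP[] ? ? ?; lra.
  have [x [[u uV ux] xp]] := clV e e_gt0.
  exact: Qe u uV x xp ux.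
move=> w wV wp.
pose Q i e := e <= p i - w i.
have [e e_gt0 Qe] : exists2 e, 0 < e & forall i, i \in enum 'I_d -> Q i e.
  apply: common_pos_bound => [i e e' Qie _ e'e | i _]; first exact: le_trans Qie.
  by exists (p i - w i); rewrite /Q ?subr_gt0 ?wp ?lexx.
have [x [x_nup xp]] := clVc e e_gt0.
apply: x_nup; exists w => // i.
have := Qe i (mem_enum _ i); have := xp i.
by rewrite /Q ltr_norml => /andP[] ? ? ?; lra.
Qed.

Lemma surface_dim_gt0 V p : surface V p -> (0 < d)%N.
Proof.
case/surfaceP => -[v vV _] p_nint; rewrite lt0n; apply/negP => /eqP d0.
by apply: (p_nint v vV) => i; have := ltn_ord i; rewrite {2}d0.
Qed.

Lemma mem_DpP V p v : v \in Dp V p -> v \in V /\ dle v p.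
Proof. by rewrite mem_filter => /andP[/forallP]. Qed.

Lemma suspended_ge0 V (M : 'I_d -> R) v i :
  suspended V M -> v \in V -> 0 <= v i.
Proof.
move=> [M_gt0 [_ Vbnd]] vV; have [[a ->] | nsusp] := classic (is_susp M v).
  by rewrite ffunE; case: ifP => // _; exact: ltW.
by have [] := Vbnd v vV nsusp i.
Qed.

Lemma susp_coord_eq0 (M : 'I_d -> R) v w k :
  is_susp M v -> is_susp M w -> v != w -> v k = w k -> v k = 0.
Proof.
move=> [a ->] [b ->] vw; rewrite !ffunE.
case: (eqVneq k a) => [ka|//]; case: (eqVneq k b) => [kb|//].
by rewrite -ka -kb eqxx in vw.
Qed.

Lemma Tp_owner_unique V (M : 'I_d -> R) p v w k :
  generic V M -> v \in V -> w \in V ->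
  k \in Tp p v -> k \in Tp p w -> 0 < p k -> v = w.
Proof.
move=> gV vV wV /[!inE] /eqP pv /eqP pw pk_gt0.
apply/eqP; apply/negP => /negP vw.
have vwk : v k = w k by rewrite -pv -pw.
have [sv sw] := gV v w vV wV vw k vwk.
by move: pk_gt0; rewrite pv (susp_coord_eq0 sv sw vw vwk) ltxx.
Qed.

(* Raise coordinate j to the least j-th coordinate among the vertices lying
   strictly below q in all other coordinates; the suspension vertex of
   direction j is one of them, and the minimiser becomes a witness. *)
Lemma raise_coord V (M : 'I_d -> R) q j :
  suspended V M -> (forall k, k != j -> 0 < q k) -> not_interior V q ->
  exists q', [/\ forall k, k != j -> q' k = q k, q j <= q' j,
    not_interior V q' & exists2 w, w \in V & dtri j q' w].
Proof.
move=> [_ [suspV _]] q_gt0 q_nint.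
pose W := [seq w : pt <- V | [forall k, (k != j) ==> (w k < q k)]].
have memW w : w \in W = (w \in V) && [forall k, (k != j) ==> (w k < q k)].
  by rewrite mem_filter andbC.
have suspW : susp_vertex M j \in W.
  rewrite memW suspV; apply/forallP => k; apply/implyP => kj.
  by rewrite ffunE (negbTE kj) q_gt0.
have W_neq0 : W != [::] by apply: contraTneq suspW => ->.
have [w + minw] := seq_argmin (fun w : pt => w j) W_neq0.
rewrite memW => /andP[wV /forallP wq].
have wq' k : k != j -> w k < q k by move=> kj; have /implyP := wq k; apply.
pose q' : pt := [ffun k => if k == j then w j else q k].
have q'_out k : k != j -> q' k = q k by move=> kj; rewrite ffunE (negbTE kj).
have q'j : q' j = w j by rewrite ffunE eqxx.
exists q'; split => //.
- rewrite q'j leNgt; apply/negP => wj; apply: (q_nint w wV) => k.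
  by case: (eqVneq k j) => [-> // | kj]; exact: wq'.
- move=> u uV uq'.
  have uW : u \in W.
    rewrite memW uV; apply/forallP => k; apply/implyP => kj.
    by have := uq' k; rewrite q'_out.
  by have := uq' j; rewrite q'j => /lt_le_trans/(_ (minw u uW)); rewrite ltxx.
- by exists w => //; split => // k kj; rewrite q'_out ?wq'.
Qed.

Lemma raise_coords V (M : 'I_d -> R) (js : seq 'I_d) q :
  suspended V M -> (forall k, 0 < q k) -> not_interior V q ->
  exists Mx, [/\ dle q Mx, forall k, k \notin js -> Mx k = q k,
    not_interior V Mx & forall j, j \in js -> exists2 w, w \in V & dtri j Mx w].
Proof.
move=> suspV; elim: js q => [|j js IH] q q_gt0 q_nint.
  by exists q; split => // i; rewrite lexx.
have [q' [q'_out q'j q'_nint [w wV [wj wq']]]] :=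
  raise_coord (j := j) suspV (fun k _ => q_gt0 k) q_nint.
have qq' : dle q q' by move=> k; case: (eqVneq k j) => [-> // | /q'_out ->].
have q'_gt0 k : 0 < q' k := lt_le_trans (q_gt0 k) (qq' k).
have [Mx [q'Mx Mx_out Mx_nint Mx_wit]] := IH q' q'_gt0 q'_nint.
exists Mx; split => //.
- by move=> k; exact: le_trans (qq' k) (q'Mx k).
- by move=> k /[!inE] /norP[kj kjs]; rewrite Mx_out // q'_out.
- move=> i /[!inE] /predU1P[-> | /Mx_wit //].
  have [/Mx_wit // | jnjs] := boolP (j \in js).
  exists w => //; split; first by rewrite Mx_out.
  by move=> k kj; exact: lt_le_trans (wq' k kj) (q'Mx k).
Qed.

Lemma maximum_of_witnesses V Mx :
  upset V Mx -> not_interior V Mx ->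
  (forall i, exists2 w, w \in V & dtri i Mx w) -> maximum V Mx.
Proof.
move=> Mx_up Mx_nint wit; split; first exact/surfaceP.
move=> q /surfaceP[_ q_nint] Mxq; apply/ffunP => i.
have [w wV [wi wMx]] := wit i.
apply/eqP; rewrite eq_le Mxq andbT leNgt; apply/negP => Mxi.
apply: (q_nint w wV) => k; have [-> | ki] := eqVneq k i; first by rewrite -wi.
exact: lt_le_trans (wMx k ki) (Mxq k).
Qed.

(* Lifting the coordinates outside C by a small eps keeps p out of the interior:
   a vertex below p is blocked by a coordinate in C, any other vertex by a
   coordinate where it exceeds p. *)
Lemma lift_off_coords V p (C : {pred 'I_d}) :
  (forall w, w \in Dp V p -> exists2 k, k \in C & w k = p k) ->
  exists q, [/\ forall k, k \in C -> q k = p k,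
    forall k, k \notin C -> p k < q k & not_interior V q].
Proof.
move=> blocked.
pose lift e : pt := [ffun k => if k \in C then p k else p k + e].
have [eps eps_gt0 lift_nint] :
    exists2 eps, 0 < eps & forall w, w \in V -> ~ dlt w (lift eps).
  apply: common_pos_bound => [w e e' wlift e'_gt0 e'e wlift' | w wV].
    apply: wlift => k; apply: lt_le_trans (wlift' k) _.
    by rewrite !ffunE; case: ifP => _; rewrite ?lerD2l.
  have [wD | wnD] := boolP (w \in Dp V p).
    have [k kC wk] := blocked w wD.
    by exists 1 => // /(_ k); rewrite ffunE kC wk ltxx.
  have [i pi_lt] : exists i, p i < w i.
    apply: NNPP => nex; move: wnD; rewrite mem_filter wV andbT => /negP; apply.
    by apply/forallP => i; rewrite leNgt; apply/negP => wpi; apply: nex; exists i.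
  exists (w i - p i); first by rewrite subr_gt0.
  by move=> /(_ i); rewrite ffunE; case: ifP => _; lra.
exists (lift eps); split => // k; rewrite ffunE.
  by move=> ->.
by move=> /negbTE ->; rewrite ltrDl.
Qed.

Definition coord_choice V p (c : pt -> 'I_d) : Prop :=
  {in Dp V p, forall v, c v \in Tp p v /\ 0 < p (c v)}.

Definition max_fixing V p (c : pt -> 'I_d) Mx : Prop :=
  [/\ maximum V Mx, dle p Mx, {in Dp V p, forall v, Mx (c v) = p (c v)} &
    forall k, k \notin map c (Dp V p) -> p k < Mx k].

Lemma choice_witness V (M : 'I_d -> R) p c Mx v :
  generic V M -> coord_choice V p c ->
  {in Dp V p, forall u, Mx (c u) = p (c u)} ->
  (forall k, k \notin map c (Dp V p) -> p k < Mx k) ->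
  v \in Dp V p -> dtri (c v) Mx v.
Proof.
move=> gV cV Mx_fix Mx_free vD; have [vV vp] := mem_DpP vD.
have [/[!inE] /eqP pv _] := cV v vD.
split=> [|k kv]; first by rewrite Mx_fix // pv.
have [/mapP[u uD ku] | kC] := boolP (k \in map c (Dp V p)); last first.
  exact: le_lt_trans (vp k) (Mx_free k kC).
subst k.
have [uV _] := mem_DpP uD; have [Tu pu_gt0] := cV u uD.
rewrite Mx_fix // lt_neqAle vp andbT; apply: contra_neq kv => vu.
suff -> : u = v by [].
by apply: (Tp_owner_unique gV uV vV Tu) => //; rewrite inE -vu.
Qed.

Lemma exists_max_fixing V (M : 'I_d -> R) p c :
  suspended V M -> generic V M -> surface V p -> coord_choice V p c ->
  exists Mx, max_fixing V p c Mx.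
Proof.
move=> suspV gV /surfaceP[[v0 v0V v0p] p_nint] cV.
pose C := map c (Dp V p).
have [q [q_fix q_free q_nint]] : exists q, [/\ forall k, k \in C -> q k = p k,
    forall k, k \notin C -> p k < q k & not_interior V q].
  apply: lift_off_coords => w wD; exists (c w); first exact: map_f.
  by have [/[!inE] /eqP] := cV w wD.
have q_gt0 k : 0 < q k.
  have [/mapP[v vD ->] | kC] := boolP (k \in C).
    by rewrite q_fix ?map_f //; case: (cV v vD).
  exact: le_lt_trans (le_trans (suspended_ge0 k suspV v0V) (v0p k)) (q_free k kC).
have [Mx [qMx Mx_fix Mx_nint Mx_wit]] :=
  raise_coords (enum [predC C]) suspV q_gt0 q_nint.
have Mx_p k : k \in C -> Mx k = p k.
  by move=> kC; rewrite Mx_fix ?q_fix // mem_enum inE kC.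
have Mx_free k : k \notin C -> p k < Mx k.
  by move=> kC; exact: lt_le_trans (q_free k kC) (qMx k).
have pMx : dle p Mx.
  by move=> k; have [/Mx_p -> // | /Mx_free /ltW //] := boolP (k \in C).
have Mx_fixc : {in Dp V p, forall v, Mx (c v) = p (c v)}.
  by move=> v vD; rewrite Mx_p ?map_f.
exists Mx; split => //; apply: maximum_of_witnesses => //.
  by exists v0 => // k; exact: le_trans (v0p k) (pMx k).
move=> i; have [/mapP[v vD ->] | iC] := boolP (i \in C).
  exists v; first exact: (mem_DpP vD).1.
  exact: choice_witness gV cV Mx_fixc Mx_free vD.
by apply: Mx_wit; rewrite mem_enum inE iC.
Qed.

Lemma max_fixing_choice_eq V (M : 'I_d -> R) p c1 c2 Mx :
  generic V M -> coord_choice V p c1 -> coord_choice V p c2 ->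
  max_fixing V p c1 Mx -> max_fixing V p c2 Mx -> {in Dp V p, c1 =1 c2}.
Proof.
move=> gV c1V c2V [_ _ Mx_fix1 _] [_ _ _ Mx_free2] v vD.
have [vV _] := mem_DpP vD; have [Tv pv_gt0] := c1V v vD.
have [/mapP[u uD c1v] | nc2] := boolP (c1 v \in map c2 (Dp V p)); last first.
  by have := Mx_free2 _ nc2; rewrite Mx_fix1 // ltxx.
have [uV _] := mem_DpP uD; have [Tu _] := c2V u uD.
rewrite c1v in Tv pv_gt0 *.
by rewrite (Tp_owner_unique gV uV vV Tu Tv pv_gt0).
Qed.

(* [g] read as a choice function on [s]; points outside [s] get the junk
   value [i0]. *)
Definition choice_of (s : seq pt) (i0 : 'I_d) (g : {ffun 'I_(size s) -> 'I_d})
  v : 'I_d := oapp g i0 (insub (index v s)).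

Lemma choice_of_tnth s i0 g j :
  uniq s -> choice_of i0 g (tnth (in_tuple s) j) = g j.
Proof.
by move=> s_uniq; rewrite /choice_of (tnth_nth (tnth (in_tuple s) j)) index_uniq ?valK.
Qed.

End OrthogonalSurface.

Theorem proposition5p1 (R : realType) (d : nat) (V : seq (pt R d))
    (M : 'I_d -> R) (p : pt R d) :
  antichain V -> suspended V M -> generic V M -> characteristic V p ->
  (forall c : pt R d -> 'I_d,
     (forall v, v \in Dp V p -> c v \in Tp p v /\ 0 < p (c v)) ->
     exists Mx : pt R d, [/\ maximum V Mx, dle p Mx &
       forall v, v \in Dp V p -> Mx (c v) = p (c v)]) /\
  ((forall i, 0 < p i) ->
     exists s : seq (pt R d), [/\ uniq s,
       forall Mx, Mx \in s -> maximum V Mx /\ dle p Mx &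
       (\prod_(v <- Dp V p) #|Tp p v| <= size s)%N]).
Proof.
move=> [V_uniq _] suspV gV [p_surf _]; split=> [c cV | p_gt0].
  by have [Mx [? ? ? _]] := exists_max_fixing suspV gV p_surf cV; exists Mx.
pose Ds := Dp V p; have Ds_uniq : uniq Ds := filter_uniq _ V_uniq.
pose i0 := Ordinal (surface_dim_gt0 p_surf).
pose F j := Tp p (tnth (in_tuple Ds) j).
have choiceP g : g \in enum (family F) -> coord_choice V p (choice_of i0 g).
  rewrite mem_enum => /familyP gF v /(tnthP (in_tuple Ds))[j ->].
  by rewrite choice_of_tnth.
have [|g1 g2 Mx g1F g2F Mx1 Mx2|s [s_uniq s_size sP]] :=
  exists_uniq_image (P := fun g => max_fixing V p (choice_of i0 g))
    (enum_uniq (family F)).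
- by move=> g /choiceP; exact: exists_max_fixing suspV gV p_surf.
- apply/ffunP => j; rewrite -!(choice_of_tnth i0 _ j Ds_uniq).
  apply: (max_fixing_choice_eq gV (choiceP _ g1F) (choiceP _ g2F) Mx1 Mx2).
  exact: mem_tnth.
exists s; split => // [Mx /sP[g _ [] //] | ].
by rewrite s_size -cardE (card_family_tnth _ (Tp p)).
Qed.
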